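(* Let $d\in\mathbb{Z}_{\ge1}$ and $\gamma\in\mathbb{Z}_{\ge2}$. If integers $y(\ell),x^{\mathrm{bin}}(\ell),z(\ell)$ ($0\le\ell\le d-1$), $r(\ell)$ ($0\le\ell\le d$) form a solution of the constraint system $\mathcal{S}(d,\gamma)$, then $r(d)=\gamma^i$ for some integer $i$ with $1\le i\le 2^d-1$. Equivalently, if $r(d)$ is not of the form $\gamma^i$ with $i\in\mathbb{Z}_{\ge1}$, the system $\mathcal{S}(d,\gamma)$ has no integer solution with this value of $r(d)$.
   Context: Constraint system $\mathcal{S}(d,\gamma)$: for given integers $d\ge1$, $\gamma\ge2$, integer variables $y(\ell),x^{\mathrm{bin}}(\ell),z(\ell)$ for $\ell\in\{0,\dots,d-1\}$ and $r(\ell)$ for $\ell\in\{0,\dots,d\}$, subject to, for every $\ell\in\{0,\dots,d-1\}$ (writing $g_\ell:=\gamma^{2^\ell}$): (C1) $y(\ell)\ge0$; (C2) $y(\ell)\le r(\ell+1)/g_\ell+1/(g_\ell+1)$; (C3) $y(\ell)\ge r(\ell+1)/g_\ell-(g_\ell-1)/g_\ell$; (C4) $x^{\mathrm{bin}}(\ell)\ge0$; (C5) $x^{\mathrm{bin}}(\ell)\le1$; (C6) $x^{\mathrm{bin}}(\ell)\le y(\ell)$; (C7) $y(\ell)\le(g_\ell+1)x^{\mathrm{bin}}(\ell)$; (C8) $r(\ell)\ge0$; (C9) $(g_\ell-1)z(\ell)+r(\ell)=r(\ell+1)$; (C10) $z(\ell)\ge0$; (C11) $z(\ell)\ge -g_\ell+g_\ell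 x^{\mathrm{bin}}(\ell)+r(\ell)$; (C12) $z(\ell)\le g_\ell x^{\mathrm{bin}}(\ell)$; (C13) $z(\ell)\le r(\ell)$; and additionally $r(0)=1$, $r(d)\ge2$, $r(d)\le\gamma^{2^d-1}$. *)

From mathcomp Require Import all_boot all_order all_algebra.
Set Implicit Arguments. Unset Strict Implicit. Unset Printing Implicit Defensive.
Import Order.TTheory GRing.Theory Num.Theory.
Local Open Scope ring_scope.

Definition gpow (gamma : int) (l : nat) : int := gamma ^+ (2 ^ l)%N.

Definition toQ (a : int) : rat := a%:~R.

(* The constraint system S(d, gamma) for integer sequences y, xbin, z
   (indices 0..d-1) and r (indices 0..d). Values outside these index
   ranges are irrelevant. *)
Definition system_S (d : nat) (gamma : int)
  (y xbin z r : nat -> int) : Prop :=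
  (forall l : nat, (l < d)%N ->
     let g := gpow gamma l in
        (0 <= y l)
     /\ (toQ (y l) <= toQ (r l.+1) / toQ g + 1 / (toQ g + 1))
     /\ (toQ (y l) >= toQ (r l.+1) / toQ g - (toQ g - 1) / toQ g)
     /\ (0 <= xbin l)
     /\ (xbin l <= 1)
     /\ (xbin l <= y l)
     /\ (y l <= (g + 1) * xbin l)
     /\ (0 <= r l)
     /\ ((g - 1) * z l + r l = r l.+1)                              (* C9 *)
     /\ (0 <= z l)
     /\ (z l >= - g + g * xbin l + r l)                             (* C11 *)
     /\ (z l <= g * xbin l)                                         (* C12 *)
     /\ (z l <= r l))                                               (* C13 *)
  /\ r 0%N = 1
  /\ 2 <= r d
  /\ r d <= gamma ^+ (2 ^ d - 1)%N.

From mathcomp Require Import all_boot all_order all_algebra.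
From mathcomp Require Import zify ring.
Import Order.TTheory GRing.Theory Num.Theory.
Local Open Scope ring_scope.

(* Constraints C11-C13 are the McCormick linearization of z(l) = xbin(l) r(l),
   so C9 says that r(l+1) is either r(l) or gamma^(2^l) r(l).  Starting from
   r(0) = 1, r(l) is therefore gamma^i with i a sum of distinct powers 2^k,
   k < l, so i < 2^l; r(d) >= 2 excludes i = 0. *)

Lemma mccormick_binary_mul {g x z w : int} :
  0 <= x <= 1 -> 0 <= z -> - g + g * x + w <= z -> z <= g * x -> z <= w ->
  z = x * w.
Proof.
move=> x01 z_ge0 z_low z_up z_le_w.
have [x0|x1] : x = 0 \/ x = 1 by lia.
- by move: z_up; rewrite x0 mulr0 mul0r; lia.
- by move: z_low; rewrite x1 mulr1 mul1r; lia.
Qed.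

Section SystemSolution.

Context {d : nat} {gamma : int} {y xbin z r : nat -> int}.
Hypothesis solS : system_S d gamma y xbin z r.

Lemma system_S_r_succ {l} : (l < d)%N ->
  r l.+1 = r l \/ r l.+1 = gpow gamma l * r l.
Proof.
move=> lt_ld; case: solS => /(_ l lt_ld) Cl _.
case: Cl => _ [_ [_ [x_ge0 [x_le1 [_ [_ [_ [rE [z_ge0 [z_low [z_up z_le_r]]]]]]]]]]].
have x01 : 0 <= xbin l <= 1 by rewrite x_ge0 x_le1.
have zE := mccormick_binary_mul x01 z_ge0 z_low z_up z_le_r.
have [xE|xE] : xbin l = 0 \/ xbin l = 1 by lia.
- by left; rewrite -rE zE xE; ring.
- by right; rewrite -rE zE xE; ring.
Qed.

Lemma system_S_r_pow {l} : (l <= d)%N -> exists2 i, (i < 2 ^ l)%N & r l = gamma ^+ i.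
Proof.
elim: l => [_ | l IHl lt_ld].
  by exists 0%N => //; case: solS => _ [-> _].
have [i lt_i rlE] := IHl (ltnW lt_ld).
have [->|->] := system_S_r_succ lt_ld.
  by exists i; rewrite // expnS mul2n -addnn ltn_addl.
exists (2 ^ l + i)%N; first by rewrite expnS mul2n -addnn ltn_add2l.
by rewrite rlE exprD.
Qed.

End SystemSolution.

Theorem mainTheorem8 (d : nat) (gamma : int) (y xbin z r : nat -> int) :
  (1 <= d)%N -> 2 <= gamma ->
  system_S d gamma y xbin z r ->
  exists i : nat, (1 <= i <= 2 ^ d - 1)%N /\ r d = gamma ^+ i.
Proof.
move=> _ _ solS.
have [i lt_i rdE] := system_S_r_pow solS (leqnn d).
have i_gt0 : (0 < i)%N.
  case: solS => _ [_ [r_ge2 _]].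
  by case: i {lt_i} rdE => // rdE; move: r_ge2; rewrite rdE expr0.
by exists i; split => //; rewrite i_gt0 /= leq_subRL ?expn_gt0 // add1n.
Qed.
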